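(* Consider the model described in the context and suppose the Lipschitz assumption holds. Let $z_1(x)=\mathbb P(x_1=x)$, $x\in\mathcal X$. For $t\in\mathbb N_T$ let $\psi_t(z)\in\mathcal G$ be any minimizer of the right-hand side of $\hat V_t(z)=\min_{\gamma\in\mathcal G}\big(\hat c_t(z,\gamma)+\hat V_{t+1}(\hat f_t(z,\gamma))\big)$, and define the deterministic sequence $z_{t+1}=\hat f_t(z_t,\psi_t(z_t))$. Define the fully decentralized strategy $\mathbf g=\{g_t\}_{t=1}^T$ in which every agent $i$ uses $u^i_t=g_t(x^i_t)$ with $$g_t(x):=\psi_t(z_t)(x),\qquad x\in\mathcal X,\ t\in\mathbb N_T.$$ Then $|J(\mathbf g)-J^\ast|\le \epsilon(n)$ for some $\epsilon(n)\in\mathcal O(1/\sqrt n)$.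
   Context: Fix $n\in\mathbb N$ agents, a horizon $T\in\mathbb N$, and finite sets $\mathcal X$ (states), $\mathcal U$ (actions), $\mathcal W$ (noises); $\mathbb N_k=\{1,\dots,k\}$. Let $\mathcal I(\mathcal X)=[0,1]^{\mathcal X}$, $\Delta(\mathcal X)$ the set of probability vectors on $\mathcal X$, and $\mathcal M_n=\{m\in\Delta(\mathcal X): m(x)\in\{0,\tfrac1n,\dots,1\}\ \forall x\}$. Agent $i\in\mathbb N_n$ has state $x^i_t\in\mathcal X$ and action $u^i_t\in\mathcal U$ at time $t\in\mathbb N_T$; the mean-field is $m_t(x)=\frac1n\sum_{i=1}^n\mathbb 1(x^i_t=x)$. Dynamics: $x^i_{t+1}=f_t(x^i_t,u^i_t,w^i_t,m_t)$ with $f_t:\mathcal X\times\mathcal U\times\mathcal W\times\mathcal I(\mathcal X)\to\mathcal X$. The initial states $x^1_1,\dots,x^n_1$ are i.i.d. with law $\mathbb P(x_1=\cdot)$; for each $t$, $w^1_t,\dots,w^n_t$ are i.i.d. with common law $\mathbb P(w_t=\cdot)$; initial states and all noises are mutually independent. Transition probabilities: $\mathbb P(y\mid x,u,z)=\sum_{w\in\mathcal W}\mathbb 1(f_t(x,u,w,z)=y)\,\mathbb P(w_t=w)$ for $z\in\mathcal I(\mathcal X)$. Costs $\ell_t:\mathcal X\times\mathcal U\times\mathcal I(\mathcal X)\to\mathbb R_{\ge0}$. Lipschitz assumption: there are constants $K^1_t,K^2_t>0$ with $|\mathbb P(y|x,u,z_1)-\mathbb P(y|x,u,z_2)|\le K^1_t\|z_1-z_2\|_\infty$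 and $|\ell_t(x,u,z_1)-\ell_t(x,u,z_2)|\le K^2_t\|z_1-z_2\|_\infty$ for all $x,y\in\mathcal X,u\in\mathcal U,z_1,z_2\in\mathcal I(\mathcal X)$. For a strategy, its cost is $J=\mathbb E\big[\sum_{t=1}^T\frac1n\sum_{i=1}^n\ell_t(x^i_t,u^i_t,m_t)\big]$. $J^\ast$ is the optimal cost over mean-field sharing strategies, i.e. strategies of the form $u^i_t=g_t(x^i_t,m_t)$ with $g_t:\mathcal X\times\mathcal M_n\to\mathcal U$ common to all agents. $\mathcal G$ is the finite set of all maps $\gamma:\mathcal X\to\mathcal U$. For $z\in\mathcal I(\mathcal X)$, $\gamma\in\mathcal G$: $\hat f_t(z,\gamma)(y)=\sum_{x}z(x)\mathbb P(y|x,\gamma(x),z)$ and $\hat c_t(z,\gamma)=\sum_x z(x)\ell_t(x,\gamma(x),z)$. The functions $\hat V_t:\Delta(\mathcal X)\to\mathbb R$ are defined by $\hat V_{T+1}\equiv0$ and $\hat V_t(z)=\min_{\gamma\in\mathcal G}\big(\hat c_t(z,\gamma)+\hat V_{t+1}(\hat f_t(z,\gamma))\big)$ for $t=T,\dots,1$. All model data ($T,\mathcal X,\mathcal U,\mathcal W,f_t,\ell_t$, the laws of initial states and noises) do not depend on $n$; $\mathcal O(1/\sqrt n)$ denotes a quantity bounded by $C/\sqrt n$ with $C$ independent of $n$. *)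

From HB Require Import structures.
From mathcomp Require Import all_boot all_order all_algebra.
From mathcomp Require Import boolp classical_sets reals.
Set Implicit Arguments. Unset Strict Implicit. Unset Printing Implicit Defensive.
Import Order.TTheory GRing.Theory Num.Theory.
Local Open Scope ring_scope.
Local Open Scope classical_set_scope.

Section MFModel.
Variables (R : realType) (X U W : finType) (T : nat).

(* Time is 0-indexed: paper time t in 1..T corresponds to t-1 in 0..T-1. *)
Variable f : nat -> X -> U -> W -> (X -> R) -> X.
Variable l : nat -> X -> U -> (X -> R) -> R.
Variable p0 : X -> R.
Variable pw : nat -> W -> R.

Definition inI (z : X -> R) : Prop := forall x, 0 <= z x <= 1.
Definition inDelta (z : X -> R) : Prop :=
  (forall x, 0 <= z x) /\ \sum_x z x = 1.
Definition isProb (A : finType) (p : A -> R) : Prop :=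
  (forall a, 0 <= p a) /\ \sum_a p a = 1.

Definition supnorm (z : X -> R) : R := \big[Num.max/0]_x `|z x|.

Definition Ptr (t : nat) (y x : X) (u : U) (z : X -> R) : R :=
  \sum_w (f t x u w z == y)%:R * pw t w.

Definition lipschitz_assumption : Prop :=
  forall t, (t < T)%N ->
    exists K1 K2 : R, 0 < K1 /\ 0 < K2 /\
    forall (x y : X) (u : U) (z1 z2 : X -> R), inI z1 -> inI z2 ->
      `|Ptr t y x u z1 - Ptr t y x u z2| <= K1 * supnorm (fun x' => z1 x' - z2 x') /\
      `|l t x u z1 - l t x u z2| <= K2 * supnorm (fun x' => z1 x' - z2 x').

Definition mfield (n : nat) (s : {ffun 'I_n -> X}) : X -> R :=
  fun x => (#|[set i | s i == x]|)%:R / n%:R.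

(* a mean-field sharing strategy: u^i_t = pol t x^i_t m_t (common to all agents) *)
Definition mfs_strategy := nat -> X -> (X -> R) -> U.

(* one step of the joint dynamics under noise sample w (steps t >= T are inert) *)
Definition step (n : nat) (pol : mfs_strategy)
    (w : {ffun 'I_T -> {ffun 'I_n -> W}}) (t : nat) (s : {ffun 'I_n -> X})
    : {ffun 'I_n -> X} :=
  match insub t with
  | Some o => [ffun i => f t (s i) (pol t (s i) (mfield s)) (w o i) (mfield s)]
  | None => s
  end.

Fixpoint traj (n : nat) (pol : mfs_strategy) (s0 : {ffun 'I_n -> X})
    (w : {ffun 'I_T -> {ffun 'I_n -> W}}) (t : nat) : {ffun 'I_n -> X} :=
  match t with
  | 0 => s0
  | t'.+1 => step pol w t' (traj pol s0 w t')
  end.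

Definition outcome_prob (n : nat) (s0 : {ffun 'I_n -> X})
    (w : {ffun 'I_T -> {ffun 'I_n -> W}}) : R :=
  (\prod_i p0 (s0 i)) * \prod_(t < T) \prod_i pw t (w t i).

Definition realized_cost (n : nat) (pol : mfs_strategy) (s0 : {ffun 'I_n -> X})
    (w : {ffun 'I_T -> {ffun 'I_n -> W}}) : R :=
  \sum_(t < T)
    let s := traj pol s0 w t in
    n%:R^-1 * \sum_(i < n) l t (s i) (pol t (s i) (mfield s)) (mfield s).

Definition Jcost (n : nat) (pol : mfs_strategy) : R :=
  \sum_(s0 : {ffun 'I_n -> X}) \sum_(w : {ffun 'I_T -> {ffun 'I_n -> W}})
     outcome_prob s0 w * realized_cost pol s0 w.

Definition Jstar (n : nat) : R := inf (range (Jcost n)).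

Definition fhat (t : nat) (z : X -> R) (g : {ffun X -> U}) : X -> R :=
  fun y => \sum_x z x * Ptr t y x (g x) z.
Definition chat (t : nat) (z : X -> R) (g : {ffun X -> U}) : R :=
  \sum_x z x * l t x (g x) z.

(* Vaux k t z : value with k steps remaining starting at time t *)
Fixpoint Vaux (k t : nat) (z : X -> R) : R :=
  match k with
  | 0 => 0
  | k'.+1 => inf [set chat t z g + Vaux k' t.+1 (fhat t z g) | g in [set: {ffun X -> U}]]
  end.
(* hat V_t (with hat V_T = 0 in 0-indexed time, i.e. hat V_{T+1} = 0 in paper) *)
Definition Vhat (t : nat) (z : X -> R) : R := Vaux (T - t) t z.

Definition Qhat (t : nat) (z : X -> R) (g : {ffun X -> U}) : R :=
  chat t z g + Vhat t.+1 (fhat t z g).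

Fixpoint zseq (psi : nat -> (X -> R) -> {ffun X -> U}) (t : nat) : X -> R :=
  match t with
  | 0 => p0
  | t'.+1 => fhat t' (zseq psi t') (psi t' (zseq psi t'))
  end.

(* the fully decentralized strategy g_t(x) = psi_t(z_t)(x), viewed as a
   (mean-field-ignoring) mean-field sharing strategy *)
Definition decentralized (psi : nat -> (X -> R) -> {ffun X -> U}) : mfs_strategy :=
  fun t x _ => psi t (zseq psi t) x.

End MFModel.

From HB Require Import structures.
From mathcomp Require Import all_boot all_order all_algebra.
From mathcomp Require Import boolp classical_sets reals.
From mathcomp Require Import ring lra.
Import Order.TTheory GRing.Theory Num.Theory.
Local Open Scope ring_scope.

(* Both J(g) and J^* are within O(1/sqrt n) of the mean-field value V_1(z_1).
   Given the current joint state, the next states of the n agents are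
   independent, so the empirical mean field m_(t+1) is at expected l1-distance
   at most |X|/sqrt n from its conditional mean f_t(m_t, gamma_t): by
   E|Y| <= sqrt(E Y^2), and because a sum of n independent centred terms bounded
   by 1 has second moment at most n.  As c_t, f_t and hence V_t are Lipschitz on
   Delta(X), telescoping V_t along the realised mean fields gives
   J(pi) >= V_1(z_1) - O(1/sqrt n) for every mean-field sharing strategy pi,
   hence for J^*.  Under the decentralized strategy the realised m_t tracks the
   deterministic z_t up to O(1/sqrt n), through a linear recursion whose ratio is
   the Lipschitz constant of f_t; this gives J(g) <= V_1(z_1) + O(1/sqrt n). *)

Set Implicit Arguments. Unset Strict Implicit. Unset Printing Implicit Defensive.

Definition ffun_upd (I A : finType) (w : {ffun I -> A}) (i0 : I) (a : A) :
    {ffun I -> A} :=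
  [ffun i => if i == i0 then a else w i].

Section ProductMeasure.
Variables (R : comPzRingType) (I A : finType) (q : I -> A -> R).

Local Notation prodq a := (\prod_i q i (a i)).

Lemma prod_ffun_upd (w : {ffun I -> A}) i0 a :
  prodq (ffun_upd w i0 a) = q i0 a * \prod_(i | i != i0) q i (w i).
Proof.
rewrite (bigD1 i0) //= ffunE eqxx; congr (_ * _).
by apply: eq_bigr => i /negbTE hi; rewrite ffunE hi.
Qed.

Lemma sum_prod_mul (phi : I -> A -> R) :
  \sum_(a : {ffun I -> A}) prodq a * \prod_i phi i (a i) =
  \prod_i \sum_b q i b * phi i b.
Proof. by rewrite bigA_distr_bigA /=; apply: eq_bigr => a _; rewrite big_split. Qed.

Hypothesis q_sum1 : forall i, \sum_b q i b = 1.

Lemma sum_prod_eq1 : \sum_(a : {ffun I -> A}) prodq a = 1.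
Proof. by rewrite -bigA_distr_bigA /=; apply: big1. Qed.

Lemma sum_prod_resample i0 (F : {ffun I -> A} -> R) :
  \sum_(w : {ffun I -> A}) prodq w * F w =
  \sum_(w : {ffun I -> A}) prodq w * \sum_a q i0 a * F (ffun_upd w i0 a).
Proof.
transitivity (\sum_(w : {ffun I -> A}) \sum_a prodq w * F w * q i0 a).
  by apply: eq_bigr => w _; rewrite -big_distrr /= q_sum1 mulr1.
under [RHS]eq_bigr => w _ do rewrite big_distrr.
rewrite !pair_bigA /=.
pose swap (p : {ffun I -> A} * A) := (ffun_upd p.1 i0 p.2, p.1 i0).
have swapK : involutive swap.
  case=> w a; rewrite /swap /= ffunE eqxx; congr (_, _).
  by apply/ffunP => i; rewrite !ffunE; case: eqP => // ->.
rewrite [RHS](reindex_inj (inv_inj swapK)) /=.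
apply: eq_bigr => -[w a] _ /=.
have -> : ffun_upd (ffun_upd w i0 a) i0 (w i0) = w.
  by apply/ffunP => i; rewrite !ffunE; case: eqP => // ->.
rewrite prod_ffun_upd (bigD1 i0) //=; ring.
Qed.

End ProductMeasure.

Section Concentration.
Variable R : rcfType.

Lemma expect_norm_le_sqrt (A : finType) (p Y : A -> R) :
  (forall a, 0 <= p a) -> \sum_a p a = 1 ->
  \sum_a p a * `|Y a| <= Num.sqrt (\sum_a p a * Y a ^+ 2).
Proof.
move=> p_ge0 p_sum1; set c := \sum_a p a * `|Y a|.
have c_ge0 : 0 <= c by apply: sumr_ge0 => a _; apply: mulr_ge0.
have var_ge0 : 0 <= \sum_a p a * (`|Y a| - c) ^+ 2.
  by apply: sumr_ge0 => a _; apply: mulr_ge0 => //; apply: sqr_ge0.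
have varE : \sum_a p a * (`|Y a| - c) ^+ 2 = \sum_a p a * Y a ^+ 2 - c ^+ 2.
  transitivity (\sum_a (p a * Y a ^+ 2 - (2 * c) * (p a * `|Y a|) + c ^+ 2 * p a)).
    by apply: eq_bigr => a _; rewrite -[Y a ^+ 2]real_normK ?num_real //; ring.
  by rewrite big_split sumrB /= -!mulr_sumr -/c p_sum1; ring.
rewrite -(ger0_norm c_ge0) -sqrtr_sqr ler_sqrt; first lra.
by apply: sumr_ge0 => a _; apply: mulr_ge0 => //; apply: sqr_ge0.
Qed.

Variables (n : nat) (A : finType) (q : 'I_n -> A -> R).
Hypotheses (q_ge0 : forall i b, 0 <= q i b) (q_sum1 : forall i, \sum_b q i b = 1).

Local Notation prodq a := (\prod_i q i (a i)).

Lemma prodq_ge0 (a : {ffun 'I_n -> A}) : 0 <= prodq a.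
Proof. by apply: prodr_ge0 => i _. Qed.

Variable D : 'I_n -> A -> R.
Hypothesis D_centered : forall i, \sum_b q i b * D i b = 0.

Lemma expect_mul_centered i j : i != j ->
  \sum_(a : {ffun 'I_n -> A}) prodq a * (D i (a i) * D j (a j)) = 0.
Proof.
move=> neq_ij.
pose phi k b := if k == i then D i b else if k == j then D j b else 1.
transitivity (\sum_(a : {ffun 'I_n -> A}) prodq a * \prod_k phi k (a k)).
  apply: eq_bigr => a _; congr (_ * _).
  rewrite (bigD1 i) //= /phi eqxx (bigD1 j) 1?eq_sym //= (negbTE neq_ij) eqxx.
  by rewrite big1 ?mulr1 // => k /andP[/negbTE-> /negbTE->].
by rewrite sum_prod_mul (bigD1 i) //= /phi eqxx D_centered mul0r.
Qed.

Lemma expect_sum_centered_sqr_le : (forall i b, `|D i b| <= 1) ->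
  \sum_(a : {ffun 'I_n -> A}) prodq a * (\sum_i D i (a i)) ^+ 2 <= n%:R.
Proof.
move=> D_le1.
have sqrE (a : {ffun 'I_n -> A}) :
    (\sum_i D i (a i)) ^+ 2 = \sum_i \sum_j D i (a i) * D j (a j).
  by rewrite expr2 big_distrl /=; apply: eq_bigr => i _; rewrite big_distrr.
under eq_bigr => a _ do rewrite sqrE mulr_sumr.
rewrite exchange_big /= -[n in n%:R]card_ord -sumr_const; apply: ler_sum => i _.
under eq_bigr => a _ do rewrite /= mulr_sumr.
rewrite exchange_big /= (bigD1 i) //= [X in _ + X]big1 ?addr0; last first.
  by move=> j neq_ji; apply: expect_mul_centered; rewrite eq_sym.
rewrite -[leRHS](sum_prod_eq1 q_sum1) ler_sum // => a _.
rewrite -[leRHS]mulr1 ler_wpM2l ?prodq_ge0 //.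
by rewrite -expr2 -real_normK ?num_real // expr_le1 ?normr_ge0.
Qed.

End Concentration.

Lemma ler_sum_term (R : numDomainType) (I : finType) (F : I -> R) i :
  (forall j, 0 <= F j) -> F i <= \sum_j F j.
Proof. by move=> F_ge0; rewrite (bigD1 i) //= lerDl sumr_ge0. Qed.

Lemma sum_mul_eq (R : pzSemiRingType) (X : finType) (F : X -> R) y :
  \sum_x F x * (x == y)%:R = F y.
Proof. by rewrite (bigD1 y) //= eqxx mulr1 big1 ?addr0 // => x /negbTE->; rewrite mulr0. Qed.

Section L1Distance.
Variables (R : numDomainType) (X : finType).
Implicit Types z : X -> R.

Definition dist1 z1 z2 : R := \sum_x `|z1 x - z2 x|.

Lemma dist1_ge0 z1 z2 : 0 <= dist1 z1 z2.
Proof. by apply: sumr_ge0 => x _. Qed.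

Lemma dist1C z1 z2 : dist1 z1 z2 = dist1 z2 z1.
Proof. by apply: eq_bigr => x _; rewrite distrC. Qed.

Lemma dist1_triangle z1 z2 z3 : dist1 z1 z3 <= dist1 z1 z2 + dist1 z2 z3.
Proof. by rewrite -big_split /=; apply: ler_sum => x _; apply: ler_distD. Qed.

End L1Distance.

Section MeanField.
Variables (R : realType) (X : finType) (n : nat).
Implicit Type s : {ffun 'I_n -> X}.

(* For [n = 0] both sides are [0], as [0^-1 = 0]. *)
Lemma mfield_average s (G : X -> R) :
  \sum_x mfield R s x * G x = n%:R^-1 * \sum_i G (s i).
Proof.
rewrite (partition_big s xpredT) //= mulr_sumr; apply: eq_bigr => x _.
rewrite (eq_bigr (fun _ => G x)) => [|i /eqP-> //].
rewrite /mfield; have -> : #|[set i | s i == x]%classic| = #|(fun i => s i == x)|.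
  by apply: eq_card => i; rewrite [LHS]inE /= asboolb.
by rewrite sumr_const -[G x *+ _]mulr_natl; ring.
Qed.

Lemma mfieldE s y : mfield R s y = n%:R^-1 * \sum_i (s i == y)%:R.
Proof. by rewrite -(mfield_average s (fun x => (x == y)%:R)) sum_mul_eq. Qed.

Lemma mfield_inDelta s : (0 < n)%N -> inDelta (mfield R s).
Proof.
move=> n_gt0; split=> [x|]; first by rewrite /mfield divr_ge0 ?ler0n.
have := mfield_average s (fun _ => 1); under eq_bigr => x _ do rewrite mulr1.
by move->; rewrite sumr_const card_ord -[_ *+ n]mulr_natl mulr1 mulVf ?pnatr_eq0 -?lt0n.
Qed.

End MeanField.

Section EmpiricalMeasure.
Variables (R : realType) (X : finType) (n : nat) (A : finType).
Variables (q : 'I_n -> A -> R) (h : 'I_n -> A -> X).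
Hypotheses (q_ge0 : forall i b, 0 <= q i b) (q_sum1 : forall i, \sum_b q i b = 1).

Lemma expect_dist1_mfield_le : (0 < n)%N ->
  \sum_(a : {ffun 'I_n -> A}) (\prod_i q i (a i)) *
     dist1 (mfield R [ffun i => h i (a i)])
           (fun y => n%:R^-1 * \sum_i \sum_b q i b * (h i b == y)%:R)
  <= #|X|%:R / Num.sqrt n%:R.
Proof.
move=> n_gt0.
under eq_bigr => a _ do rewrite mulr_sumr.
have -> : #|X|%:R / Num.sqrt n%:R = \sum_(y : X) (Num.sqrt n%:R)^-1 :> R.
  by rewrite sumr_const -[RHS]mulr_natl.
rewrite exchange_big /=; apply: ler_sum => y _.
pose D i b : R := (h i b == y)%:R - \sum_b' q i b' * (h i b' == y)%:R.
have D_centered i : \sum_b q i b * D i b = 0.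
  under eq_bigr => b _ do rewrite mulrBr.
  by rewrite sumrB -big_distrl /= q_sum1 mul1r subrr.
have D_le1 i b : `|D i b| <= 1.
  have e_ge0 : 0 <= \sum_b' q i b' * (h i b' == y)%:R.
    by apply: sumr_ge0 => b' _; apply: mulr_ge0.
  have e_le1 : \sum_b' q i b' * (h i b' == y)%:R <= 1.
    rewrite -[leRHS](q_sum1 i); apply: ler_sum => b' _.
    by rewrite -[leRHS]mulr1 ler_wpM2l //; case: (_ == _).
  by rewrite ler_norml /D; case: (_ == _) => /=; apply/andP; split; lra.
have distE (a : {ffun 'I_n -> A}) :
    `|mfield R [ffun i => h i (a i)] y - n%:R^-1 * \sum_i \sum_b q i b * (h i b == y)%:R|
    = n%:R^-1 * `|\sum_i D i (a i)|.
  rewrite mfieldE -mulrBr normrM ger0_norm ?invr_ge0 ?ler0n // /D sumrB.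
  by under eq_bigr => i _ do rewrite ffunE.
under eq_bigr => a _ do rewrite distE mulrCA.
rewrite -mulr_sumr.
have sqrt_n_pos : 0 < Num.sqrt n%:R :> R by rewrite sqrtr_gt0 ltr0n.
have -> : (Num.sqrt n%:R)^-1 = n%:R^-1 * Num.sqrt n%:R :> R.
  by rewrite -{2}[n%:R :> R]sqr_sqrtr ?ler0n //; field; rewrite gt_eqF.
rewrite ler_wpM2l ?invr_ge0 ?ler0n //.
apply: le_trans (expect_norm_le_sqrt _ (fun a => prodq_ge0 q_ge0 a)
  (sum_prod_eq1 q_sum1)) _.
by rewrite ler_sqrt ?ler0n // expect_sum_centered_sqr_le.
Qed.

End EmpiricalMeasure.

Lemma normrMB_le (R : numDomainType) (a1 a2 b1 b2 : R) :
  `|a1 * b1 - a2 * b2| <= `|a1 - a2| * `|b1| + `|a2| * `|b1 - b2|.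
Proof.
have -> : a1 * b1 - a2 * b2 = (a1 - a2) * b1 + a2 * (b1 - b2) by ring.
by rewrite -!normrM ler_normD.
Qed.

Lemma uniform_nonneg_bound (R : numDomainType) (T : nat) (P : nat -> R -> Prop) :
  (forall t K K', 0 <= K <= K' -> P t K -> P t K') ->
  (forall t, (t < T)%N -> exists2 K, 0 <= K & P t K) ->
  exists2 K, 0 <= K & forall t, (t < T)%N -> P t K.
Proof.
move=> P_mono; elim: T => [_|T IH PT]; first by exists 0.
have [K K_ge0 HK] := IH (fun t ht => PT t (ltnW ht)).
have [K' K'_ge0 HK'] := PT T (ltnSn T).
exists (K + K'); first exact: addr_ge0.
move=> t; rewrite ltnS leq_eqVlt => /predU1P[->|ht].
  by apply: P_mono HK'; rewrite K'_ge0 lerDr.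
by apply: P_mono (HK t ht); rewrite K_ge0 lerDl.
Qed.

Section InfImage.
Local Open Scope classical_set_scope.
Variables (R : realType) (G : finType).
Implicit Types F : G -> R.

Lemma inf_image_min F gs : (forall g, F gs <= F g) ->
  inf [set F g | g in [set: G]] = F gs.
Proof.
move=> gs_min; apply/eqP; rewrite eq_le; apply/andP; split.
  by apply: ge_inf; [exists (F gs) => _ [g _ <-] | exists gs].
by apply: lb_le_inf => [|_ [g _ <-] //]; exists (F gs), gs.
Qed.

Lemma inf_image_le F g : inf [set F g | g in [set: G]] <= F g.
Proof.
have [gs _ gs_min] := @arg_minP _ R G g xpredT F isT.
by rewrite (@inf_image_min F gs) => [|h]; apply: gs_min.
Qed.

Lemma inf_image_leD F1 F2 c : 0 <= c -> (forall g, F1 g <= F2 g + c) ->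
  inf [set F1 g | g in [set: G]] <= inf [set F2 g | g in [set: G]] + c.
Proof.
move=> c_ge0 le_F12; case: (pickP (fun _ : G => true)) => [g0 _|G_empty].
  have [gs _ gs_min] := @arg_minP _ R G g0 xpredT F2 isT.
  rewrite (@inf_image_min F2 gs) => [|g]; last exact: gs_min.
  exact: le_trans (inf_image_le F1 gs) _.
have img0 F : [set F g | g in [set: G]] = set0.
  by apply/seteqP; split=> // y [g _ _]; have := G_empty g.
by rewrite !img0 lerDl.
Qed.

End InfImage.

Section Model.
Local Open Scope classical_set_scope.
Variables (R : realType) (X U W : finType) (T : nat).
Variables (f : nat -> X -> U -> W -> (X -> R) -> X) (l : nat -> X -> U -> (X -> R) -> R).
Variables (p0 : X -> R) (pw : nat -> W -> R).
Implicit Types (z : X -> R) (g : {ffun X -> U}).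

Definition Ptr_lipschitz t (K : R) := forall x y u z1 z2, inI z1 -> inI z2 ->
  `|Ptr f pw t y x u z1 - Ptr f pw t y x u z2| <= K * dist1 z1 z2.

Definition cost_lipschitz t (K : R) := forall x u z1 z2, inI z1 -> inI z2 ->
  `|l t x u z1 - l t x u z2| <= K * dist1 z1 z2.

Lemma supnorm_le_dist1 z1 z2 : supnorm (fun x => z1 x - z2 x) <= dist1 z1 z2.
Proof.
apply: bigmax_le => [|x _] /=; first exact: dist1_ge0.
exact: ler_sum_term.
Qed.

Lemma lipschitz_assumption_dist1 : lipschitz_assumption T f l pw ->
  (exists2 K1, 0 <= K1 & forall t, (t < T)%N -> Ptr_lipschitz t K1) /\
  (exists2 K2, 0 <= K2 & forall t, (t < T)%N -> cost_lipschitz t K2).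
Proof.
move=> lip; have scale K K' z1 z2 : 0 <= K <= K' -> K * dist1 z1 z2 <= K' * dist1 z1 z2.
  by case/andP=> _ le_KK'; rewrite ler_wpM2r ?dist1_ge0.
have scale_sup K z1 z2 : 0 < K ->
    K * supnorm (fun x => z1 x - z2 x) <= K * dist1 z1 z2.
  by move=> K_gt0; rewrite ler_pM2l // supnorm_le_dist1.
have Ptr_mono t K K' : 0 <= K <= K' -> Ptr_lipschitz t K -> Ptr_lipschitz t K'.
  by move=> KK' HK x y u z1 z2 h1 h2; apply: le_trans (HK _ _ _ _ _ h1 h2) (scale _ _ _ _ KK').
have cost_mono t K K' : 0 <= K <= K' -> cost_lipschitz t K -> cost_lipschitz t K'.
  by move=> KK' HK x u z1 z2 h1 h2; apply: le_trans (HK _ _ _ _ h1 h2) (scale _ _ _ _ KK').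
split; apply: uniform_nonneg_bound => // t ht;
  have [K1 [K2 [K1_gt0 [K2_gt0 HK]]]] := lip t ht.
- exists K1 => [|x y u z1 z2 h1 h2]; first exact: ltW.
  exact: le_trans (proj1 (HK x y u z1 z2 h1 h2)) (scale_sup _ _ _ K1_gt0).
- exists K2 => [|x u z1 z2 h1 h2]; first exact: ltW.
  exact: le_trans (proj2 (HK x x u z1 z2 h1 h2)) (scale_sup _ _ _ K2_gt0).
Qed.

Hypothesis pw_prob : forall t, isProb (pw t).

Lemma Ptr_ge0 t y x u z : 0 <= Ptr f pw t y x u z.
Proof. by apply: sumr_ge0 => w _; rewrite mulr_ge0 ?ler0n //; case: (pw_prob t). Qed.

Lemma sum_Ptr t x u z : \sum_y Ptr f pw t y x u z = 1.
Proof.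
rewrite /Ptr exchange_big /= -[RHS](proj2 (pw_prob t)); apply: eq_bigr => w _.
rewrite -big_distrl /= -[X in _ = X]mul1r; congr (_ * _).
rewrite -[RHS](sum_mul_eq (fun=> 1) (f t x u w z)).
by apply: eq_bigr => y _; rewrite mul1r eq_sym.
Qed.

Lemma inDelta_inI z : inDelta z -> inI z.
Proof. by case=> z_ge0 z_sum1 x; rewrite z_ge0 -z_sum1 ler_sum_term. Qed.

Lemma fhat_inDelta t z g : inDelta z -> inDelta (fhat f pw t z g).
Proof.
case=> z_ge0 z_sum1; split=> [y|].
  by apply: sumr_ge0 => x _; rewrite mulr_ge0 ?Ptr_ge0.
rewrite /fhat exchange_big /= -z_sum1; apply: eq_bigr => x _.
by rewrite -mulr_sumr sum_Ptr mulr1.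
Qed.

Hypothesis l_ge0 : forall t x u z, 0 <= l t x u z.
Variables K1 K2 : R.
Hypotheses (K1_ge0 : 0 <= K1) (K2_ge0 : 0 <= K2).
Hypothesis Ptr_lip : forall t, (t < T)%N -> Ptr_lipschitz t K1.
Hypothesis l_lip : forall t, (t < T)%N -> cost_lipschitz t K2.

(* [dist1 z 0 = 1] on [Delta(X)], so [K2] bounds the oscillation of the cost around [z = 0]. *)
Definition cost_bound : R := \sum_(t < T) \sum_x \sum_u l t x u (fun _ => 0) + K2.
Definition Lchat : R := cost_bound + K2.
Definition Lfhat : R := 1 + #|X|%:R * K1.

Lemma cost_bound_ge0 : 0 <= cost_bound.
Proof. by rewrite addr_ge0 //; do 3 apply: sumr_ge0 => ? _. Qed.

Lemma Lchat_ge0 : 0 <= Lchat.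
Proof. by rewrite addr_ge0 ?cost_bound_ge0. Qed.

Lemma Lfhat_ge0 : 0 <= Lfhat.
Proof. by rewrite addr_ge0 ?mulr_ge0. Qed.

Lemma cost_le_bound t x u z : (t < T)%N -> inDelta z -> l t x u z <= cost_bound.
Proof.
move=> ht z_delta.
have zero_I : inI (fun _ : X => 0 : R) by move=> ? /=; rewrite lexx ler01.
have := l_lip ht x u (inDelta_inI z_delta) zero_I.
have -> : dist1 z (fun _ => 0) = 1.
  by rewrite -(proj2 z_delta); apply: eq_bigr => x' _; rewrite subr0 ger0_norm ?(proj1 z_delta).
rewrite mulr1 ler_norml => /andP[_ le_l].
have : l t x u (fun _ => 0) <= \sum_(t' < T) \sum_x' \sum_u' l t' x' u' (fun _ => 0).
  have sum_ge0 t' x' : 0 <= \sum_u' l t' x' u' (fun _ => 0) by apply: sumr_ge0.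
  apply: le_trans (ler_sum_term (Ordinal ht) (fun t' => sumr_ge0 _ (fun x' _ => sum_ge0 t' x'))).
  exact: le_trans (ler_sum_term u (fun _ => l_ge0 _ _ _ _)) (ler_sum_term x (sum_ge0 t)).
rewrite /cost_bound; lra.
Qed.

Lemma chat_lipschitz t g z1 z2 : (t < T)%N -> inDelta z1 -> inDelta z2 ->
  `|chat l t z1 g - chat l t z2 g| <= Lchat * dist1 z1 z2.
Proof.
move=> ht h1 h2; rewrite /chat -sumrB; apply: le_trans (ler_norm_sum _ _ _) _.
apply: (@le_trans _ _ (\sum_x (`|z1 x - z2 x| * cost_bound + z2 x * (K2 * dist1 z1 z2)))).
  apply: ler_sum => x _; apply: le_trans (normrMB_le _ _ _ _) _.
  rewrite (ger0_norm (proj1 h2 x)) (ger0_norm (l_ge0 _ _ _ _)).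
  rewrite lerD ?ler_wpM2l ?(proj1 h2 x) ?cost_le_bound //.
  exact: l_lip ht _ _ _ _ (inDelta_inI h1) (inDelta_inI h2).
by rewrite big_split /= -!mulr_suml (proj2 h2) mul1r /Lchat -/(dist1 z1 z2); lra.
Qed.

Lemma fhat_lipschitz t g z1 z2 : (t < T)%N -> inDelta z1 -> inDelta z2 ->
  dist1 (fhat f pw t z1 g) (fhat f pw t z2 g) <= Lfhat * dist1 z1 z2.
Proof.
move=> ht h1 h2.
apply: (@le_trans _ _ (\sum_y \sum_x
    (`|z1 x - z2 x| * Ptr f pw t y x (g x) z1 + z2 x * (K1 * dist1 z1 z2)))).
  apply: ler_sum => y _; rewrite /fhat -sumrB; apply: le_trans (ler_norm_sum _ _ _) _.
  apply: ler_sum => x _; apply: le_trans (normrMB_le _ _ _ _) _.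
  rewrite (ger0_norm (proj1 h2 x)) (ger0_norm (Ptr_ge0 _ _ _ _ _)) lerD2l.
  rewrite ler_wpM2l ?(proj1 h2 x) //.
  exact: Ptr_lip ht _ _ _ _ _ (inDelta_inI h1) (inDelta_inI h2).
rewrite exchange_big /=; under eq_bigr => x _ do rewrite big_split /= -mulr_sumr sum_Ptr mulr1.
rewrite big_split /= -/(dist1 z1 z2) exchange_big /=.
under eq_bigr => y _ do rewrite -mulr_suml (proj2 h2) mul1r.
by rewrite sumr_const -mulr_natl /Lfhat mulrDl mul1r mulrA.
Qed.

Fixpoint Lvalue k : R := if k is k'.+1 then Lchat + Lvalue k' * Lfhat else 0.

Lemma Lvalue_ge0 k : 0 <= Lvalue k.
Proof.
by elim: k => //= k IH; rewrite addr_ge0 ?mulr_ge0 ?Lchat_ge0 ?Lfhat_ge0.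
Qed.

Lemma Lvalue_nondecr : {homo Lvalue : j k / (j <= k)%N >-> j <= k}.
Proof.
apply: Order.NatMonotonyTheory.nondecnP; elim=> [|k IH] /=; first by rewrite mul0r addr0 Lchat_ge0.
by rewrite lerD2l ler_wpM2r ?Lfhat_ge0.
Qed.

Lemma Vaux_lipschitz k t z1 z2 : (t + k <= T)%N -> inDelta z1 -> inDelta z2 ->
  Vaux f l pw k t z1 <= Vaux f l pw k t z2 + Lvalue k * dist1 z1 z2.
Proof.
elim: k t z1 z2 => [|k IH] t z1 z2 tk h1 h2 /=; first by rewrite mul0r addr0.
have ht : (t < T)%N by apply: leq_trans tk; rewrite addnS ltnS leq_addr.
have tk' : (t.+1 + k <= T)%N by rewrite addSn -addnS.
apply: inf_image_leD => [|g]; first by rewrite mulr_ge0 ?dist1_ge0 ?(Lvalue_ge0 k.+1).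
have := chat_lipschitz g ht h1 h2; rewrite ler_norml => /andP[_ ?].
have := IH t.+1 _ _ tk' (fhat_inDelta t g h1) (fhat_inDelta t g h2).
have : Lvalue k * dist1 (fhat f pw t z1 g) (fhat f pw t z2 g) <=
    Lvalue k * (Lfhat * dist1 z1 z2) by rewrite ler_wpM2l ?Lvalue_ge0 ?fhat_lipschitz.
lra.
Qed.

Lemma Vhat_lipschitz t z1 z2 : (t <= T)%N -> inDelta z1 -> inDelta z2 ->
  Vhat T f l pw t z1 <= Vhat T f l pw t z2 + Lvalue T * dist1 z1 z2.
Proof.
move=> ht h1 h2; apply: le_trans (Vaux_lipschitz _ h1 h2) _; first by rewrite subnKC.
by rewrite lerD2l ler_wpM2r ?dist1_ge0 ?Lvalue_nondecr ?leq_subr.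
Qed.

Lemma Vhat_T z : Vhat T f l pw T z = 0.
Proof. by rewrite /Vhat subnn. Qed.

Lemma Vhat_recE t z : (t < T)%N ->
  Vhat T f l pw t z = inf [set Qhat T f l pw t z g | g in [set: {ffun X -> U}]].
Proof. by move=> ht; rewrite /Vhat /Qhat -(subnSK ht). Qed.

Lemma Vhat_le_Qhat t z g : (t < T)%N -> Vhat T f l pw t z <= Qhat T f l pw t z g.
Proof. by move=> ht; rewrite Vhat_recE ?inf_image_le. Qed.

Variable psi : nat -> (X -> R) -> {ffun X -> U}.
Hypothesis psi_min : forall t, (t < T)%N -> forall z, inDelta z ->
  forall g, Qhat T f l pw t z (psi t z) <= Qhat T f l pw t z g.

Lemma Vhat_psiE t z : (t < T)%N -> inDelta z ->
  Vhat T f l pw t z = Qhat T f l pw t z (psi t z).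
Proof. by move=> ht hz; rewrite Vhat_recE // (inf_image_min (psi_min ht hz)). Qed.

Hypothesis p0_prob : isProb p0.

Section NAgents.
Variable n : nat.
Local Notation state := {ffun 'I_n -> X}.
Local Notation noise := {ffun 'I_T -> {ffun 'I_n -> W}}.
Implicit Types (pol : mfs_strategy R X U) (s : state) (w : noise).

Definition mean_field pol s w t : X -> R := mfield R (traj f pol s w t).

Definition prescription pol s w t : {ffun X -> U} := [ffun x => pol t x (mean_field pol s w t)].

Definition step_error pol s w t : R :=
  dist1 (mean_field pol s w t.+1) (fhat f pw t (mean_field pol s w t) (prescription pol s w t)).

Lemma realized_costE pol s w :
  realized_cost f l pol s w = \sum_(t < T) chat l t (mean_field pol s w t) (prescription pol s w t).
Proof.
apply: eq_bigr => t _ /=; rewrite /chat /mean_field mfield_average; congr (_ * _).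
by apply: eq_bigr => i _; rewrite ffunE.
Qed.

Definition expect (F : state -> noise -> R) : R :=
  \sum_s \sum_w outcome_prob p0 pw s w * F s w.

Lemma JcostE pol : Jcost T f l p0 pw n pol = expect (realized_cost f l pol).
Proof. by []. Qed.

Definition init_prob s : R := \prod_i p0 (s i).
Definition slice_prob (t : 'I_T) (a : {ffun 'I_n -> W}) : R := \prod_i pw t (a i).
Definition noise_prob w : R := \prod_t slice_prob t (w t).

Lemma sum_slice_prob t : \sum_a slice_prob t a = 1.
Proof. by apply: (sum_prod_eq1 (q := fun=> pw t)) => i; case: (pw_prob t). Qed.

Lemma init_prob_ge0 s : 0 <= init_prob s.
Proof. by apply: (prodq_ge0 (q := fun=> p0)) => i; case: p0_prob. Qed.

Lemma noise_prob_ge0 w : 0 <= noise_prob w.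
Proof.
by apply: prodr_ge0 => t _; apply: (prodq_ge0 (q := fun=> pw t)) => i; case: (pw_prob t).
Qed.

Lemma sum_init_prob : \sum_s init_prob s = 1.
Proof. by apply: (sum_prod_eq1 (q := fun=> p0)) => i; case: p0_prob. Qed.

Lemma sum_noise_prob : \sum_w noise_prob w = 1.
Proof. exact: sum_prod_eq1 sum_slice_prob. Qed.

Lemma expectE F : expect F = \sum_s init_prob s * \sum_w noise_prob w * F s w.
Proof.
apply: eq_bigr => s _; rewrite mulr_sumr; apply: eq_bigr => w _.
by rewrite /outcome_prob mulrA.
Qed.

Lemma ler_expect F G : (forall s w, F s w <= G s w) -> expect F <= expect G.
Proof.
move=> le_FG; apply: ler_sum => s _; apply: ler_sum => w _.
by rewrite ler_wpM2l // mulr_ge0 ?init_prob_ge0 ?noise_prob_ge0.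
Qed.

Lemma expect_le_noise F c : (forall s, \sum_w noise_prob w * F s w <= c) ->
  expect F <= c.
Proof.
move=> le_Fc; rewrite expectE -[leRHS]mul1r -sum_init_prob mulr_suml.
by apply: ler_sum => s _; rewrite ler_wpM2l ?init_prob_ge0.
Qed.

Lemma expect_cst c : expect (fun _ _ => c) = c.
Proof.
rewrite expectE; under eq_bigr => s _ do rewrite -mulr_suml sum_noise_prob mul1r.
by rewrite -mulr_suml sum_init_prob mul1r.
Qed.

Lemma expectD F G : expect (fun s w => F s w + G s w) = expect F + expect G.
Proof.
rewrite /expect -big_split; apply: eq_bigr => s _.
by rewrite -big_split; apply: eq_bigr => w _; rewrite mulrDr.
Qed.

Lemma expectZ a F : expect (fun s w => a * F s w) = a * expect F.
Proof.
rewrite /expect mulr_sumr; apply: eq_bigr => s _.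
by rewrite mulr_sumr; apply: eq_bigr => w _; rewrite mulrCA.
Qed.

Lemma expect_sum (F : 'I_T -> state -> noise -> R) :
  expect (fun s w => \sum_(t < T) F t s w) = \sum_(t < T) expect (F t).
Proof.
rewrite /expect; under eq_bigr => s _ do under eq_bigr => w _ do rewrite mulr_sumr.
by under eq_bigr => s _ do rewrite exchange_big /=; rewrite exchange_big.
Qed.

Lemma realized_cost_ge0 pol s w : 0 <= realized_cost f l pol s w.
Proof.
apply: sumr_ge0 => t _; rewrite mulr_ge0 ?invr_ge0 ?ler0n //.
by apply: sumr_ge0 => i _.
Qed.

Lemma Jcost_ge0 pol : 0 <= Jcost T f l p0 pw n pol.
Proof. by rewrite -[0](expect_cst 0); apply: ler_expect => s w; apply: realized_cost_ge0. Qed.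

Lemma traj_upd_early pol s w (j : 'I_T) a k : (k <= j)%N ->
  traj f pol s (ffun_upd w j a) k = traj f pol s w k.
Proof.
elim: k => [//|k IH] lt_kj /=; rewrite IH ?(ltnW lt_kj) // /step.
case: insubP => [o _ o_k|//]; apply/ffunP => i; rewrite !ffunE.
by have -> : (o == j) = false by rewrite -val_eqE /= o_k ltn_eqF.
Qed.

Lemma traj_upd_next pol s w t (ht : (t < T)%N) a :
  let st := traj f pol s w t in
  traj f pol s (ffun_upd w (Ordinal ht) a) t.+1 =
  [ffun i => f t (st i) (pol t (st i) (mfield R st)) (a i) (mfield R st)].
Proof.
rewrite /= traj_upd_early // /step (insubT (fun t => (t < T)%N) ht).
by apply/ffunP => i; rewrite !ffunE eqxx.
Qed.

Hypothesis n_gt0 : (0 < n)%N.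

Local Notation eps := (#|X|%:R / Num.sqrt n%:R : R).

Lemma mean_field_inDelta pol s w t : inDelta (mean_field pol s w t).
Proof. exact: mfield_inDelta. Qed.

Lemma expect_init_error pol : expect (fun s w => dist1 (mean_field pol s w 0) p0) <= eps.
Proof.
rewrite expectE /mean_field /=.
under eq_bigr => s _ do rewrite -mulr_suml sum_noise_prob mul1r.
have := expect_dist1_mfield_le (fun=> (fun b : X => b)) (fun=> proj1 p0_prob)
  (fun=> proj2 p0_prob) n_gt0.
congr (_ <= _); apply: eq_bigr => s _; congr (_ * dist1 _ _).
  by congr (mfield R _); apply/ffunP => i; rewrite ffunE.
apply/funext => y; under eq_bigr => i _ do rewrite sum_mul_eq.
by rewrite sumr_const card_ord -[p0 y *+ _]mulr_natl mulrA mulVf ?mul1r // pnatr_eq0 -lt0n.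
Qed.

(* Conditionally on the history up to time [t], the [n] states at [t + 1] are independent. *)
Lemma expect_step_error pol t : (t < T)%N ->
  expect (fun s w => step_error pol s w t) <= eps.
Proof.
move=> ht; apply: expect_le_noise => s.
rewrite /noise_prob (sum_prod_resample sum_slice_prob (Ordinal ht)).
apply: (@le_trans _ _ (\sum_w noise_prob w * eps)); last first.
  by rewrite -mulr_suml sum_noise_prob mul1r.
apply: ler_sum => w _; rewrite ler_wpM2l ?noise_prob_ge0 //; set st := traj f pol s w t.
apply: le_trans (expect_dist1_mfield_le
  (fun i b => f t (st i) (pol t (st i) (mfield R st)) b (mfield R st))
  (fun=> proj1 (pw_prob t)) (fun=> proj2 (pw_prob t)) n_gt0).
rewrite le_eqVlt; apply/predU1P; left; apply: eq_bigr => a _; congr (_ * dist1 _ _).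
  by rewrite /mean_field traj_upd_next.
apply/funext => y; rewrite /fhat /prescription /mean_field !traj_upd_early // -/st.
rewrite mfield_average; congr (_ * _); apply: eq_bigr => i _.
by rewrite ffunE /Ptr; apply: eq_bigr => b _; rewrite mulrC.
Qed.

Lemma Vhat_telescope_lower pol s w k : (k <= T)%N ->
  Vhat T f l pw 0 (mean_field pol s w 0) <=
  \sum_(t < k) (chat l t (mean_field pol s w t) (prescription pol s w t)
                + Lvalue T * step_error pol s w t)
  + Vhat T f l pw k (mean_field pol s w k).
Proof.
elim: k => [_|k IH lt_kT]; first by rewrite big_ord0 add0r.
apply: le_trans (IH (ltnW lt_kT)) _; rewrite big_ord_recr /= -addrA lerD2l.
have := Vhat_le_Qhat (mean_field pol s w k) (prescription pol s w k) lt_kT.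
have := Vhat_lipschitz lt_kT
  (fhat_inDelta k (prescription pol s w k) (mean_field_inDelta pol s w k))
  (mean_field_inDelta pol s w k.+1).
by rewrite dist1C /Qhat -/(step_error pol s w k); lra.
Qed.

Lemma realized_cost_lower pol s w :
  Vhat T f l pw 0 p0 <= realized_cost f l pol s w +
    Lvalue T * (dist1 (mean_field pol s w 0) p0 + \sum_(t < T) step_error pol s w t).
Proof.
have := Vhat_telescope_lower pol s w (leqnn T).
rewrite Vhat_T addr0 big_split /= -mulr_sumr -realized_costE.
have := Vhat_lipschitz (leq0n T) p0_prob (mean_field_inDelta pol s w 0).
by rewrite dist1C mulrDr; lra.
Qed.

Lemma Jcost_lower pol :
  Vhat T f l pw 0 p0 - Lvalue T * (T.+1%:R * eps) <= Jcost T f l p0 pw n pol.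
Proof.
have := ler_expect (realized_cost_lower pol).
rewrite expect_cst expectD expectZ expectD (expect_sum (fun t s w => step_error pol s w t)).
have err_le : expect (fun s w => dist1 (mean_field pol s w 0) p0) +
    \sum_(t < T) expect (fun s w => step_error pol s w t) <= T.+1%:R * eps.
  rewrite -addn1 natrD mulrDl mul1r addrC lerD ?expect_init_error //.
  apply: le_trans (ler_sum _ (fun t _ => expect_step_error pol (ltn_ord t))) _.
  by rewrite sumr_const card_ord -[_ *+ T]mulr_natl.
have := ler_wpM2l (Lvalue_ge0 T) err_le; rewrite JcostE; lra.
Qed.

Local Notation pol_dec := (decentralized f p0 pw psi).
Local Notation z := (zseq f p0 pw psi).

Lemma zseq_inDelta t : inDelta (z t).
Proof. by elim: t => [|t IH] //=; apply: fhat_inDelta. Qed.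

Lemma prescription_decentralized s w t : prescription pol_dec s w t = psi t (z t).
Proof. by apply/ffunP => x; rewrite ffunE. Qed.

Lemma Vhat_zseq k : (k <= T)%N ->
  Vhat T f l pw 0 p0 = \sum_(t < k) chat l t (z t) (psi t (z t)) + Vhat T f l pw k (z k).
Proof.
elim: k => [_|k IH lt_kT]; first by rewrite big_ord0 add0r.
rewrite IH ?(ltnW lt_kT) // big_ord_recr /= -addrA.
by rewrite (Vhat_psiE lt_kT (zseq_inDelta k)).
Qed.

Lemma realized_cost_upper s w :
  realized_cost f l pol_dec s w <=
  Vhat T f l pw 0 p0 + Lchat * \sum_(t < T) dist1 (mean_field pol_dec s w t) (z t).
Proof.
rewrite realized_costE (Vhat_zseq (leqnn T)) Vhat_T addr0 mulr_sumr -big_split /=.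
apply: ler_sum => t _; rewrite prescription_decentralized.
have := chat_lipschitz (psi t (z t)) (ltn_ord t)
  (mean_field_inDelta pol_dec s w t) (zseq_inDelta t).
by rewrite ler_norml => /andP[_]; lra.
Qed.

Lemma tracking_step s w t : (t < T)%N ->
  dist1 (mean_field pol_dec s w t.+1) (z t.+1) <=
  step_error pol_dec s w t + Lfhat * dist1 (mean_field pol_dec s w t) (z t).
Proof.
move=> ht; set m := mean_field pol_dec s w t.
apply: le_trans (dist1_triangle _ (fhat f pw t m (psi t (z t))) _) _.
rewrite /step_error prescription_decentralized lerD2l.
exact: fhat_lipschitz (mean_field_inDelta pol_dec s w t) (zseq_inDelta t).
Qed.

Fixpoint tracking_const k : R := if k is k'.+1 then 1 + Lfhat * tracking_const k' else 1.

Lemma expect_tracking t : (t <= T)%N ->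
  expect (fun s w => dist1 (mean_field pol_dec s w t) (z t)) <= tracking_const t * eps.
Proof.
elim: t => [_|t IH lt_tT]; first by rewrite mul1r; apply: expect_init_error.
apply: le_trans (ler_expect (fun s w => tracking_step s w lt_tT)) _.
rewrite expectD expectZ [tracking_const _]/= [in leRHS]mulrDl [in leRHS]mul1r.
rewrite lerD ?expect_step_error //.
by rewrite -mulrA ler_wpM2l ?Lfhat_ge0 ?IH ?(ltnW lt_tT).
Qed.

Lemma Jcost_upper :
  Jcost T f l p0 pw n pol_dec <=
  Vhat T f l pw 0 p0 + Lchat * \sum_(t < T) tracking_const t * eps.
Proof.
apply: le_trans (ler_expect realized_cost_upper) _.
rewrite expectD expect_cst expectZ lerD2l ler_wpM2l ?Lchat_ge0 //.
rewrite (expect_sum (fun t s w => dist1 (mean_field pol_dec s w t) (z t))).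
by apply: ler_sum => t _; apply: expect_tracking; apply: ltnW.
Qed.

End NAgents.

Lemma Jcost_decentralized_near_Jstar : exists C : R, forall n : nat, (0 < n)%N ->
  `| Jcost T f l p0 pw n (decentralized f p0 pw psi) - Jstar T f l p0 pw n |
    <= C / Num.sqrt (n%:R).
Proof.
exists ((Lchat * \sum_(t < T) tracking_const t + Lvalue T * T.+1%:R) * #|X|%:R) => n n_gt0.
pose eps : R := #|X|%:R / Num.sqrt n%:R.
set J := Jcost T f l p0 pw n (decentralized f p0 pw psi).
have J_upper := Jcost_upper n_gt0; rewrite -/J -/eps -mulr_suml in J_upper.
have Jstar_le : Jstar T f l p0 pw n <= J.
  apply: ge_inf; last by exists (decentralized f p0 pw psi).
  by exists 0 => _ [pol _ <-]; apply: Jcost_ge0.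
have Jstar_ge : Vhat T f l pw 0 p0 - Lvalue T * (T.+1%:R * eps) <= Jstar T f l p0 pw n.
  apply: lb_le_inf; first by exists J, (decentralized f p0 pw psi).
  by move=> _ [pol _ <-]; apply: Jcost_lower.
rewrite ger0_norm ?subr_ge0 // -mulrA -/eps mulrDl -!mulrA.
lra.
Qed.

End Model.

Unset Implicit Arguments.

Theorem theorem1 (R : realType) (X U W : finType) (T : nat)
  (f : nat -> X -> U -> W -> (X -> R) -> X)
  (l : nat -> X -> U -> (X -> R) -> R)
  (p0 : X -> R) (pw : nat -> W -> R)
  (Hp0 : isProb p0)
  (Hpw : forall t, isProb (pw t))
  (Hl : forall t x u z, 0 <= l t x u z)
  (Hlip : lipschitz_assumption T f l pw)
  (psi : nat -> (X -> R) -> {ffun X -> U})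
  (Hpsi : forall t, (t < T)%N -> forall z, inDelta z ->
     forall g, Qhat T f l pw t z (psi t z) <= Qhat T f l pw t z g) :
  exists C : R, forall n : nat, (0 < n)%N ->
    `| Jcost T f l p0 pw n (decentralized f p0 pw psi) - Jstar T f l p0 pw n |
      <= C / Num.sqrt (n%:R).
Proof.
have [[K1 K1_ge0 Ptr_lip] [K2 K2_ge0 l_lip]] := lipschitz_assumption_dist1 Hlip.
exact (Jcost_decentralized_near_Jstar Hpw Hl K1_ge0 K2_ge0 Ptr_lip l_lip Hpsi Hp0).
Qed.
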